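(* For all integers $n \geq k \geq 1$, under the natural bi-partition of inputs (Alice holds $x \in \{0,1\}^n$, Bob holds $y \in \{0,1\}^k$), $R(\operatorname{SSD}_{n,k}) = \Omega(\log k)$.
   Context: $\operatorname{SSD}_{n,k} : \{0,1\}^n \times \{0,1\}^k \to \{0,1\}$ is $1$ iff $y$ is a subsequence of $x$ (there exist indices $i_1 < \dots < i_k$ with $x_{i_j} = y_j$). $R(f)$ is the minimum worst-case number of bits exchanged by a randomized two-party protocol computing $f$ with error probability at most $1/3$ on every input. *)

From HB Require Import structures.
From mathcomp Require Import all_boot all_order all_algebra.
From Stdlib Require Import Rdefinitions.
From mathcomp Require Import Rstruct.

Set Implicit Arguments.
Unset Strict Implicit.
Unset Printing Implicit Defensive.

Import Order.TTheory GRing.Theory Num.Theory.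

Definition SSD (n k : nat) (x : n.-tuple bool) (y : k.-tuple bool) : bool :=
  subseq (y : seq bool) (x : seq bool).

(* At an Alice node, Alice sends the bit msg x and the protocol continues
   in the corresponding subtree (false -> first, true -> second);
   symmetrically at Bob nodes. *)
Inductive proto (X Y : Type) : Type :=
  | PLeaf of bool
  | PAlice of (X -> bool) & proto X Y & proto X Y
  | PBob of (Y -> bool) & proto X Y & proto X Y.

Arguments PLeaf {X Y}.

Fixpoint depth X Y (P : proto X Y) : nat :=
  match P with
  | PLeaf _ => 0
  | PAlice _ P0 P1 => (maxn (depth P0) (depth P1)).+1
  | PBob _ P0 P1 => (maxn (depth P0) (depth P1)).+1
  end.

Fixpoint run X Y (P : proto X Y) (x : X) (y : Y) : bool :=
  match P with
  | PLeaf b => b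
  | PAlice m P0 P1 => if m x then run P1 x y else run P0 x y
  | PBob m P0 P1 => if m y then run P1 x y else run P0 x y
  end.

Local Open Scope ring_scope.

Definition is_distr (T : finType) (p : T -> Rdefinitions.R) : Prop :=
  (forall t, 0 <= p t) /\ \sum_(t : T) p t = 1.

(* Private-coin randomized protocol: Alice's private randomness a : RA is
   drawn from pA, Bob's b : RB from pB, independently; the protocol is a
   deterministic protocol on inputs (x, a) and (y, b). *)
Definition computes_with_error_third (X Y : Type) (f : X -> Y -> bool)
    (RA RB : finType) (pA : RA -> Rdefinitions.R) (pB : RB -> Rdefinitions.R)
    (P : proto (X * RA) (Y * RB)) : Prop :=
  is_distr pA /\ is_distr pB /\
  forall x y,
    (\sum_(a : RA) \sum_(b : RB)
        pA a * pB b * (run P (x, a) (y, b) != f x y)%:R <= 1 / 3).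

Definition R_le (X Y : Type) (f : X -> Y -> bool) (c : nat) : Prop :=
  exists (RA RB : finType) (pA : RA -> Rdefinitions.R) (pB : RB -> Rdefinitions.R)
         (P : proto (X * RA) (Y * RB)),
    computes_with_error_third f pA pB P /\ leq (depth P) c.

From HB Require Import structures.
From mathcomp Require Import all_boot all_order all_algebra.
From Stdlib Require Import Rdefinitions.
From mathcomp Require Import Rstruct.
From mathcomp Require Import ring lra zify.
(* Rstruct rebinds [_ ^ _] in nat_scope to [Nat.pow]; restore [expn]. *)
From mathcomp Require Import ssrnat.

(* Fix the coins: the accepting leaves of a protocol of cost c are at most
   2^c combinatorial rectangles, so the acceptance probability is a sum of
   at most L = 2^c products a_i(x) b_i(y), where a_i(x) is the probability
   over Alice's coins that x falls in the Alice side of the i-th rectangle.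
   Rounding every a_i(x) down to a multiple of 1/(3L+3) moves the acceptance
   probability by less than 1/3, so two inputs of Alice with the same rounded
   vector are accepted together on every yes-instance.  The words
   x_t = t 1 0^(n-k) and y_t = t 1, for t of length k-1, satisfy
   SSD(x_t', y_t) iff t' = t, hence have pairwise distinct rounded vectors:
   2^(k-1) <= (3L+4)^L, i.e. log k = O(c). *)

Set Implicit Arguments.
Unset Strict Implicit.
Unset Printing Implicit Defensive.
Import Order.TTheory GRing.Theory Num.Theory.

Section Rectangles.
Variables X Y : Type.

Fixpoint rectangles (P : proto X Y) : seq ((X -> bool) * (Y -> bool)) :=
  match P with
  | PLeaf b => if b then [:: (fun _ => true, fun _ => true)] else [::]
  | PAlice m P0 P1 =>
      [seq (fun x => ~~ m x && r.1 x, r.2) | r <- rectangles P0] ++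
      [seq (fun x => m x && r.1 x, r.2) | r <- rectangles P1]
  | PBob m P0 P1 =>
      [seq (r.1, fun y => ~~ m y && r.2 y) | r <- rectangles P0] ++
      [seq (r.1, fun y => m y && r.2 y) | r <- rectangles P1]
  end.

Lemma run_rectangles P x y :
  run P x y = \sum_(r <- rectangles P) (r.1 x && r.2 y) :> nat.
Proof.
elim: P => [[]|m P0 IH0 P1 IH1|m P0 IH0 P1 IH1] /=;
  rewrite ?big_nil ?big_seq1 ?big_cat ?big_map //=.
- by case: (m x); rewrite /= big1_eq ?add0n ?addn0.
- case: (m y) => /=; rewrite ?IH0 ?IH1.
  + by rewrite [X in X + _]big1 // => r _; rewrite andbF.
  + by rewrite [X in _ + X]big1 ?addn0 // => r _; rewrite andbF.
Qed.

Lemma size_rectangles P : size (rectangles P) <= 2 ^ depth P.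
Proof.
elim: P => [[]|m P0 IH0 P1 IH1|m P0 IH0 P1 IH1] //=;
  rewrite size_cat !size_map expnS mul2n -addnn;
  by apply: leq_add; [apply: leq_trans IH0 _|apply: leq_trans IH1 _];
     rewrite leq_exp2l ?leq_maxl ?leq_maxr.
Qed.

End Rectangles.

Local Open Scope ring_scope.

Definition mass (T : finType) (p : T -> R) (A : pred T) : R :=
  \sum_t p t * (A t)%:R.

Lemma mass_ge0 (T : finType) (p : T -> R) A : is_distr p -> 0 <= mass p A.
Proof.
by move=> [p_ge0 _]; apply: sumr_ge0 => t _; rewrite mulr_ge0 ?ler0n.
Qed.

Lemma mass_le1 (T : finType) (p : T -> R) A : is_distr p -> mass p A <= 1.
Proof.
move=> [p_ge0 <-]; apply: ler_sum => t _.
by case: (A t); rewrite ?mulr1 ?mulr0.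
Qed.

Definition round_down (M : nat) (a : R) : 'I_M.+1 := inord (Num.truncn (a * M%:R)).

Lemma round_downK (M : nat) (a : R) : 0 <= a <= 1 ->
  round_down M a = Num.truncn (a * M%:R) :> nat.
Proof.
move=> /andP[a_ge0 a_le1]; rewrite inordK // ltnS truncn_le_nat.
have : a * M%:R <= M%:R by rewrite ler_piMl.
by rewrite -addn1 natrD; lra.
Qed.

Lemma round_down_inj_close (M : nat) (a b : R) : (0 < M)%N ->
  0 <= a <= 1 -> 0 <= b <= 1 -> round_down M a = round_down M b ->
  a <= b + M%:R^-1.
Proof.
move=> M_gt0 a01 b01 /(congr1 (@nat_of_ord _)).
rewrite !round_downK // => eq_trunc.
have := truncnS_gt (a * M%:R); rewrite eq_trunc -addn1 natrD.
have /andP[b_ge0 _] := b01.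
have : (Num.truncn (b * M%:R))%:R <= b * M%:R by rewrite truncn_le mulr_ge0.
have M_pos : (0 : R) < M%:R by rewrite ltr0n.
move=> trunc_le a_lt; rewrite -(ler_pM2r M_pos) mulrDl mulVf ?gt_eqF //; lra.
Qed.

Section AcceptanceProbability.
Variables (X Y : Type) (RA RB : finType) (pA : RA -> R) (pB : RB -> R).
Implicit Types (P : proto (X * RA) (Y * RB)) (x : X) (y : Y).

Definition accept_prob P x y : R :=
  \sum_a \sum_b pA a * pB b * (run P (x, a) (y, b))%:R.

Definition alice_mass P x (i : 'I_(size (rectangles P))) : R :=
  mass pA (fun a => (tnth (in_tuple (rectangles P)) i).1 (x, a)).
Arguments alice_mass : clear implicits.

Definition bob_mass P y (i : 'I_(size (rectangles P))) : R :=
  mass pB (fun b => (tnth (in_tuple (rectangles P)) i).2 (y, b)).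
Arguments bob_mass : clear implicits.

Lemma accept_probE P x y :
  accept_prob P x y = \sum_i alice_mass P x i * bob_mass P y i.
Proof.
transitivity (\sum_(r <- rectangles P)
  mass pA (fun a => r.1 (x, a)) * mass pB (fun b => r.2 (y, b))); last first.
  by rewrite big_tnth.
rewrite /accept_prob /mass.
under eq_bigr => a _ do under eq_bigr => b _ do
  rewrite run_rectangles natr_sum big_distrr /=.
rewrite exchange_big /=; under eq_bigr => a _ do rewrite exchange_big /=.
rewrite exchange_big; apply: eq_bigr => r _ /=.
rewrite exchange_big big_distrl; apply: eq_bigr => a _ /=.
rewrite big_distrr; apply: eq_bigr => b _ /=.
by case: (r.1 (x, a)); case: (r.2 (y, b)); rewrite /= ?mulr1 ?mulr0 ?mul0r; ring.
Qed.

Lemma joint_mass1 : is_distr pA -> is_distr pB -> \sum_a \sum_b pA a * pB b = 1.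
Proof.
by move=> [_ pA1] [_ pB1]; under eq_bigr do rewrite -mulr_sumr pB1 mulr1.
Qed.

Lemma accept_prob_leaf b x y : is_distr pA -> is_distr pB ->
  accept_prob (PLeaf b) x y = b%:R.
Proof.
move=> dA dB; case: b; rewrite /accept_prob /=.
- by under eq_bigr do under eq_bigr do rewrite mulr1; exact: joint_mass1.
- by rewrite big1 // => a _; rewrite big1 // => b _; rewrite mulr0.
Qed.

Lemma error_probE (f : X -> Y -> bool) P x y : is_distr pA -> is_distr pB ->
  \sum_a \sum_b pA a * pB b * (run P (x, a) (y, b) != f x y)%:R =
  if f x y then 1 - accept_prob P x y else accept_prob P x y.
Proof.
move=> dA dB; have joint := joint_mass1 dA dB.
case: (f x y).
- rewrite -[in RHS]joint /accept_prob -sumrB; apply: eq_bigr => a _.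
  rewrite -sumrB; apply: eq_bigr => b _.
  by case: (run _ _ _); rewrite /= ?mulr1 ?mulr0 ?subrr ?subr0.
- by apply: eq_bigr => a _; apply: eq_bigr => b _; case: (run _ _ _).
Qed.

Section Correctness.
Variables (f : X -> Y -> bool) (P : proto (X * RA) (Y * RB)).
Hypothesis f_P : computes_with_error_third f pA pB P.

Lemma accept_prob_ge x y : f x y -> 2 / 3 <= accept_prob P x y.
Proof.
move=> fxy; have [dA [dB err]] := f_P; have := err x y.
by rewrite error_probE // fxy; lra.
Qed.

Lemma accept_prob_le x y : ~~ f x y -> accept_prob P x y <= 1 / 3.
Proof.
move=> /negbTE fxy; have [dA [dB err]] := f_P.
by have := err x y; rewrite error_probE // fxy.
Qed.

Lemma accept_prob_close x1 x2 y (d : R) : 0 <= d ->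
    (forall i, alice_mass P x1 i <= alice_mass P x2 i + d) ->
  accept_prob P x1 y <= accept_prob P x2 y + (size (rectangles P))%:R * d.
Proof.
have [_ [dB _]] := f_P; move=> d_ge0 close.
have -> : (size (rectangles P))%:R * d = \sum_(i < size (rectangles P)) d.
  by rewrite sumr_const card_ord mulr_natl.
rewrite !accept_probE -big_split /=.
apply: ler_sum => i _; have := close i.
have := mass_ge0 (fun b => (tnth (in_tuple (rectangles P)) i).2 (y, b)) dB.
have := mass_le1 (fun b => (tnth (in_tuple (rectangles P)) i).2 (y, b)) dB.
rewrite -/(bob_mass P y i); nra.
Qed.

Local Notation L := (size (rectangles P)).

Definition signature M x : L.-tuple 'I_M.+1 :=
  [tuple round_down M (alice_mass P x i) | i < L].

Lemma signature_eq_accept x1 x2 y :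
  signature (3 * L + 3) x1 = signature (3 * L + 3) x2 -> f x1 y -> f x2 y.
Proof.
move=> eq_sig /accept_prob_ge acc1; apply/negPn/negP => /accept_prob_le acc2.
have [dA _] := f_P; set M := (3 * L + 3)%N.
have M_pos : (0 : R) < M%:R by rewrite ltr0n /M addn3.
have mass01 x i : 0 <= alice_mass P x i <= 1 by rewrite mass_ge0 ?mass_le1.
have close i : alice_mass P x1 i <= alice_mass P x2 i + M%:R^-1.
  apply: round_down_inj_close; rewrite ?mass01 //; first by rewrite /M addn3.
  by have := congr1 (fun s => tnth s i) eq_sig; rewrite !tnth_mktuple.
have Minv_ge0 : 0 <= M%:R^-1 :> R by rewrite invr_ge0 ltW.
have := accept_prob_close y Minv_ge0 close.
have : L%:R * M%:R^-1 < 1 / 3 :> R.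
  rewrite -(ltr_pM2r M_pos) -mulrA mulVf ?gt_eqF // mulr1 /M natrD natrM.
  lra.
lra.
Qed.

Lemma fooling_set_card (T : finType) (xs : T -> X) (ys : T -> Y) :
    (forall t, f (xs t) (ys t)) -> (forall t t', f (xs t') (ys t) -> t' = t) ->
  (#|T| <= (3 * L + 4) ^ L)%N.
Proof.
move=> diag off.
have sig_inj : injective (fun t => signature (3 * L + 3) (xs t)).
  by move=> t t' eq_sig; apply/esym/off/(signature_eq_accept eq_sig)/diag.
by have := leq_card _ sig_inj; rewrite card_tuple card_ord -addn1 -addnA.
Qed.

End Correctness.

Lemma computes_depth0 f P x y x' y' : computes_with_error_third f pA pB P ->
  depth P = 0%N -> f x y = f x' y'.
Proof.
case: P => // b f_P _; have [dA [dB _]] := f_P.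
suff leaf x1 y1 : f x1 y1 = b by rewrite !leaf.
case f1: (f x1 y1).
- have := accept_prob_ge f_P f1; rewrite accept_prob_leaf //.
  by case: b f_P => _ //=; rewrite mulr0n; lra.
- have := accept_prob_le f_P (negbT f1); rewrite accept_prob_leaf //.
  by case: b f_P => _ //=; rewrite mulr1n; lra.
Qed.

End AcceptanceProbability.

Local Close Scope ring_scope.

Lemma subseq_rcons_true_cat_nseq_false (s1 s2 : seq bool) r :
  subseq (rcons s1 true) (s2 ++ nseq r false) = subseq (rcons s1 true) s2.
Proof.
rewrite -[LHS]subseq_rev -[RHS]subseq_rev rev_rcons rev_cat rev_nseq.
by elim: r.
Qed.

Lemma subseq_size_eq (T : eqType) (s1 s2 : seq T) :
  size s1 = size s2 -> subseq s1 s2 -> s1 = s2.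
Proof. by move=> eq_size /size_subseq_leqif; rewrite eq_size => /leqif_refl/eqP. Qed.

Section SubsequenceFoolingSet.
Variables n k : nat.
Hypotheses (k_gt0 : 0 < k) (k_le_n : k <= n).

Definition fooling_x (t : k.-1.-tuple bool) : n.-tuple bool :=
  insubd (nseq_tuple n false) (rcons t true ++ nseq (n - k) false).

Definition fooling_y (t : k.-1.-tuple bool) : k.-tuple bool :=
  insubd (nseq_tuple k false) (rcons t true).

Lemma fooling_xE t : val (fooling_x t) = rcons t true ++ nseq (n - k) false.
Proof.
rewrite insubdK // unfold_in /= size_cat size_rcons size_nseq size_tuple.
by rewrite prednK // subnKC.
Qed.

Lemma fooling_yE t : val (fooling_y t) = rcons t true.
Proof. by rewrite insubdK // unfold_in /= size_rcons size_tuple prednK. Qed.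

Lemma SSD_fooling_diag t : SSD (fooling_x t) (fooling_y t).
Proof. by rewrite /SSD fooling_xE fooling_yE prefix_subseq. Qed.

Lemma SSD_fooling_offdiag t t' : SSD (fooling_x t') (fooling_y t) -> t' = t.
Proof.
rewrite /SSD fooling_xE fooling_yE subseq_rcons_true_cat_nseq_false.
move/subseq_size_eq; rewrite !size_rcons !size_tuple => /(_ erefl).
by move/rcons_inj => [/val_inj].
Qed.

Lemma SSD_zero_fooling_y t : ~~ SSD (nseq_tuple n false) (fooling_y t).
Proof.
apply/negP; rewrite /SSD fooling_yE => /mem_subseq /(_ true).
by rewrite mem_rcons mem_head mem_nseq andbF => /(_ isT).
Qed.

End SubsequenceFoolingSet.

Lemma leq_affine_pow a b l m : 0 < b -> l <= m -> (a * l + b) ^ l <= (a * m + b) ^ m.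
Proof.
move=> b_gt0 le_lm; have base_gt0 : 0 < a * m + b by rewrite ltn_addl.
case: l le_lm => [|l] le_lm; first by rewrite expn_gt0 base_gt0.
apply: (@leq_trans ((a * m + b) ^ l.+1)); last exact: leq_pexp2l.
by rewrite leq_exp2r // leq_add2r leq_mul2l le_lm orbT.
Qed.

Lemma trunc_log2_le c k : 0 < c -> 0 < k ->
  2 ^ k.-1 <= (3 * 2 ^ c + 4) ^ 2 ^ c -> trunc_log 2 k <= 4 * c.
Proof.
move=> c_gt0 k_gt0 count_k; set X := 2 ^ c in count_k.
have c_lt_X : c < X by apply: ltn_expl.
have base : 3 * X + 4 <= 2 ^ (c + 3) by rewrite expnD -/X; lia.
have k_le_cX : k <= (c + 3) * X + 1.
  rewrite -(prednK k_gt0) addn1 ltnS.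
  rewrite -(leq_exp2l _ _ (isT : 1 < 2)) expnM.
  by apply: leq_trans count_k _; rewrite leq_exp2r // expn_gt0.
have k_le : k <= 2 ^ (2 * c + 2).
  by rewrite expnD (mulnC 2 c) expnM -/X (expnS X) expn1; nia.
have := leq_trans (trunc_logP (isT : 1 < 2) k_gt0) k_le.
by rewrite leq_exp2l //; lia.
Qed.

Theorem mainTheorem7 :
  exists C : nat, forall n k c : nat,
    (1 <= k)%N -> (k <= n)%N ->
    R_le (@SSD n k) c ->
    (trunc_log 2 k <= C * c)%N.
Proof.
exists 4 => n k c k_gt0 k_le_n [RA [RB [pA [pB [P [ssd_P depth_P]]]]]].
have c_gt0 : 0 < c.
  rewrite lt0n; apply/eqP => c0; move: depth_P; rewrite c0 leqn0 => /eqP P0.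
  set t := nseq_tuple k.-1 false.
  have := computes_depth0 (fooling_x n t) (fooling_y t)
    (nseq_tuple n false) (fooling_y t) ssd_P P0.
  by rewrite SSD_fooling_diag // (negbTE (SSD_zero_fooling_y _ _ _)).
apply: trunc_log2_le => //.
have := fooling_set_card ssd_P
  (SSD_fooling_diag k_gt0 k_le_n) (SSD_fooling_offdiag k_gt0 k_le_n).
rewrite card_tuple card_bool => /leq_trans; apply; apply: leq_affine_pow => //.
by apply: leq_trans (size_rectangles P) _; rewrite leq_exp2l.
Qed.
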